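(* Fix $\varepsilon>0$, $\delta\in(0,1)$, an even integer $d>4(e^{2\varepsilon}-1)^2\ln(12e^{\varepsilon}n/\delta)$, and $\varepsilon$-private randomizers $R_1,\dots,R_n:[d]\to\mathcal Y$. If $H$ is chosen uniformly among subsets of $[d]$ of size $d/2$, then with probability greater than $2/3$ over $H$, every randomizer $Q_{H,R_i}$, $i\in[n]$, is $(\varepsilon',\delta)$-private, where \[ \varepsilon'=(e^{2\varepsilon}-1)\sqrt{\frac{16}{d}\ln\left(24e^{\varepsilon}n/\delta\right)} . \]
   Context: $\mathcal Y$ is a countable message set. A randomizer $R:\mathcal X\to\mathcal Y$ is $(\varepsilon,\delta)$-private if for all $x,x'\in\mathcal X$ and all $Y\subseteq\mathcal Y$, $\Pr[R(x)\in Y]\le e^{\varepsilon}\Pr[R(x')\in Y]+\delta$; it is $\varepsilon$-private if this holds with $\delta=0$. $\mathbf U_H$ is the uniform distribution on $H\subseteq[d]$, $\overline H=[d]\setminus H$, and $R(\mathbf U_H)$ is the distribution of $R(\hat x)$ with $\hat x\sim\mathbf U_H$. For $H\subset[d]$ with $|H|=d/2$ and a randomizer $R:[d]\to\mathcal Y$, $Q_{H,R}:\{\pm1\}\to\mathcal Y$ is the randomizer that on input $+1$ outputs a sample of $R(\mathbf U_H)$ and on input $-1$ outputs a sample of $R(\mathbf U_{\overline H})$. *)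

From Stdlib Require Import Reals Lra List Arith Bool ClassicalEpsilon.
Import ListNotations.
Open Scope R_scope.

(* The countable message set Y is represented by nat (any countable set
   embeds in nat; extra messages get probability 0). A distribution on Y
   is a probability mass function p : nat -> R. *)
Definition is_dist (p : nat -> R) : Prop :=
  (forall y, 0 <= p y) /\ infinite_sum p 1.

Definition restrict (p : nat -> R) (S : nat -> Prop) : nat -> R :=
  fun y => if excluded_middle_informative (S y) then p y else 0.

Definition PrIs (p : nat -> R) (S : nat -> Prop) (a : R) : Prop :=
  infinite_sum (restrict p S) a.

Definition private {X : Type} (D : X -> Prop) (Q : X -> nat -> R)
  (eps delta : R) : Prop :=
  forall x x', D x -> D x' ->
  forall (S : nat -> Prop) (a b : R),
    PrIs (Q x) S a -> PrIs (Q x') S b -> a <= exp eps * b + delta.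

Definition in_range (d : nat) : nat -> Prop := fun x => (x < d)%nat.

Definition randomizer (d : nat) (Rz : nat -> nat -> R) : Prop :=
  forall x, (x < d)%nat -> is_dist (Rz x).

(* Subsets H of [d] are represented by their characteristic lists of
   length d: x \in H iff nth x H false = true. *)
Definition memH (H : list bool) (x : nat) : bool := nth x H false.

Fixpoint bool_lists (d : nat) : list (list bool) :=
  match d with
  | O => [nil]
  | S d' => map (cons true) (bool_lists d') ++ map (cons false) (bool_lists d')
  end.

Definition half_subsets (d : nat) : list (list bool) :=
  filter (fun H => Nat.eqb (count_occ bool_dec H true) (Nat.div d 2))
         (bool_lists d).

Definition decP {A : Type} (P : A -> Prop) (a : A) : bool :=
  if excluded_middle_informative (P a) then true else false.

Definition prob_H (d : nat) (P : list bool -> Prop) : R :=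
  INR (length (filter (decP P) (half_subsets d))) /
  INR (length (half_subsets d)).

Definition sum_d (d : nat) (f : nat -> R) : R :=
  fold_right (fun x acc => f x + acc) 0 (seq 0 d).

(* The distribution of Rz(x^), x^ uniform on the subset of [d] where
   memH H = b (b = true: H; b = false: complement of H). *)
Definition mixture (d : nat) (H : list bool) (b : bool) (Rz : nat -> nat -> R)
  : nat -> R :=
  fun y =>
    sum_d d (fun x => if Bool.eqb (memH H x) b then Rz x y else 0) /
    INR (length (filter (fun x => Bool.eqb (memH H x) b) (seq 0 d))).

(* Q_{H,R} : {+1,-1} -> Y, with +1 encoded as true and -1 as false. *)
Definition Q_HR (d : nat) (H : list bool) (Rz : nat -> nat -> R) : bool -> nat -> R :=
  fun s => mixture d H s Rz.

From Stdlib Require Import Reals Arith Lra Lia List Bool ClassicalEpsilon FunctionalExtensionality.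
From Coquelicot Require Import Coquelicot.
Import ListNotations.
Open Scope R_scope.

(* For a fixed output y, the masses R_i x y (x in [d]) lie within a factor e^eps of one another.
   By Hoeffding's inequality for sampling without replacement, their sum over a uniform half
   subset H exceeds half of the total by the relative amount w = eps'/5 only with probability
   at most delta / (24 e^eps n).  The sampling inequality reduces to the independent case because
   products over a uniform k-subset are dominated by products over independent k/d-biased coins,
   a comparison of elementary symmetric polynomials.  Outside this event the two mixtures
   R_i(U_H) and R_i(U_{[d] \ H}) are within a factor e^eps' of each other at y.  Summing the
   remaining excess mass over y and applying Markov's inequality over H shows that, for each i
   and each input of Q_{H,R_i}, more than delta of mass escapes for at most a 1/(12n) fraction
   of the sets H; a union bound over these 2n events leaves at least 5/6 of them. *)

Lemma exp_le_exp_compat (x y : R) : x <= y -> exp x <= exp y.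
Proof. intros [Hlt|<-]; [left; now apply exp_increasing | lra]. Qed.

Lemma exp_gt_1 (eps : R) : 0 < eps -> 1 < exp eps.
Proof. intros Heps. rewrite <- exp_0. now apply exp_increasing. Qed.

Lemma nondecreasing_from_0 (f f' : R -> R) (u : R) : 0 <= u ->
  (forall c, 0 <= c <= u -> is_derive f c (f' c)) ->
  (forall c, 0 <= c <= u -> 0 <= f' c) -> f 0 <= f u.
Proof.
  intros Hu Hder Hpos. destruct (Req_dec u 0) as [->|Hne]; [lra|].
  destruct (MVT_cor2 f f' 0 u) as [c [Hdiff Hc]]; [lra| |].
  - intros c Hc. apply is_derive_Reals, Hder; lra.
  - assert (0 <= f' c) by (apply Hpos; lra). nra.
Qed.

Lemma sinh_le_mul_cosh (v : R) : 0 <= v ->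
  (exp v - exp (- v)) / 2 <= v * ((exp v + exp (- v)) / 2).
Proof.
  intros Hv.
  set (f x := x * ((exp x + exp (- x)) / 2) - (exp x - exp (- x)) / 2).
  assert (Hmono : f 0 <= f v).
  { apply (nondecreasing_from_0 f (fun x => x * ((exp x - exp (- x)) / 2))); auto.
    - intros c _. unfold f. auto_derive; auto. lra.
    - intros c Hc. assert (exp (- c) <= exp c) by (apply exp_le_exp_compat; lra). nra. }
  unfold f in Hmono. rewrite Rmult_0_l, Ropp_0, exp_0 in Hmono. lra.
Qed.

Lemma cosh_le_exp_sqr_half_nonneg (u : R) : 0 <= u ->
  (exp u + exp (- u)) / 2 <= exp (u * u / 2).
Proof.
  intros Hu.
  set (cosh x := (exp x + exp (- x)) / 2).
  assert (Hcosh : forall x, 0 < cosh x)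
    by (intros; unfold cosh; pose proof (exp_pos x); pose proof (exp_pos (- x)); lra).
  set (g x := x * x / 2 - ln (cosh x)).
  assert (Hmono : g 0 <= g u).
  { apply (nondecreasing_from_0 g (fun x => x - ((exp x - exp (- x)) / 2) / cosh x)); auto.
    - intros c _. pose proof (exp_pos c); pose proof (exp_pos (- c)).
      unfold g, cosh. auto_derive; [lra|field; lra].
    - intros c Hc. pose proof (sinh_le_mul_cosh c (proj1 Hc)). pose proof (Hcosh c).
      assert (((exp c - exp (- c)) / 2) / cosh c <= c) by (apply Rle_div_l; auto).
      lra. }
  unfold g, cosh in Hmono. rewrite Rmult_0_l, Ropp_0, exp_0 in Hmono.
  replace ((1 + 1) / 2) with 1 in Hmono by field. rewrite ln_1 in Hmono.
  fold (cosh u) in Hmono |- *. rewrite <- (exp_ln (cosh u)) by apply Hcosh.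
  apply exp_le_exp_compat. lra.
Qed.

(* Hoeffding's lemma for a fair coin with values 0 and z. *)
Lemma hoeffding_fair_coin (z : R) : (1 + exp z) / 2 <= exp (z / 2 + z * z / 8).
Proof.
  assert (E : (1 + exp z) / 2 = exp (z / 2) * ((exp (z / 2) + exp (- (z / 2))) / 2)).
  { rewrite Rmult_div_assoc, Rmult_plus_distr_l, <- !exp_plus.
    replace (z / 2 + z / 2) with z by field. rewrite Rplus_opp_r, exp_0. lra. }
  rewrite E, exp_plus. apply Rmult_le_compat_l; [left; apply exp_pos|].
  destruct (Rle_dec 0 (z / 2)) as [Hz|Hz].
  - replace (z * z / 8) with (z / 2 * (z / 2) / 2) by field.
    now apply cosh_le_exp_sqr_half_nonneg.
  - pose proof (cosh_le_exp_sqr_half_nonneg (- (z / 2))) as Hc.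
    rewrite Ropp_involutive, Rplus_comm in Hc.
    replace (z * z / 8) with (- (z / 2) * - (z / 2) / 2) by field. apply Hc. lra.
Qed.

Lemma one_add_le_exp_mul_one_sub (e : R) : 0 <= e <= 3 -> 1 + e / 5 <= exp e * (1 - e / 5).
Proof. intros He. pose proof (exp_ineq1_le e). nra. Qed.

Lemma imbalance_of_ratio (s s' T w E : R) :
  0 <= s' -> s + s' = T -> 0 <= T -> 0 <= E -> 1 + w <= E * (1 - w) -> E * s' < s ->
  T / 2 * (1 + w) < s.
Proof.
  intros Hs' HT HT0 HE Hw Hlt. apply Rnot_le_lt. intros Hle.
  assert (T / 2 * (1 + w) <= E * (T / 2 * (1 - w))) by nra.
  assert (E * (T / 2 * (1 - w)) <= E * s') by (apply Rmult_le_compat_l; lra).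
  lra.
Qed.

Lemma tail_exponent_le (d T a K w : R) : 0 < d -> 0 < a -> 1 < K -> d * a <= T ->
  - (2 * (w * T / 2) ^ 2) / (d * ((K - 1) * a) ^ 2) <= - (d * w ^ 2) / (2 * (K - 1) ^ 2).
Proof.
  intros Hd Ha HK HaT.
  replace (- (2 * (w * T / 2) ^ 2) / (d * ((K - 1) * a) ^ 2))
    with (- (w ^ 2 / (2 * (K - 1) ^ 2)) * (T ^ 2 / (d * a ^ 2))) by (field; repeat split; lra).
  replace (- (d * w ^ 2) / (2 * (K - 1) ^ 2)) with (- (w ^ 2 / (2 * (K - 1) ^ 2)) * d) by (field; lra).
  apply Rmult_le_compat_neg_l.
  - assert (0 <= w ^ 2 / (2 * (K - 1) ^ 2)) by (apply Rdiv_le_0_compat; [apply pow2_ge_0|nra]). lra.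
  - assert (0 <= d * a) by (apply Rmult_le_pos; lra).
    apply Rle_div_r; [apply Rmult_lt_0_compat; [lra|apply pow_lt; lra]|]. nra.
Qed.

Definition lsum {A : Type} (l : list A) (f : A -> R) : R :=
  fold_right (fun a acc => f a + acc) 0 l.

Lemma lsum_app {A : Type} (l1 l2 : list A) (f : A -> R) : lsum (l1 ++ l2) f = lsum l1 f + lsum l2 f.
Proof. induction l1; simpl; [ring|]. unfold lsum in *. simpl. rewrite IHl1. ring. Qed.

Lemma lsum_ext {A : Type} (l : list A) (f g : A -> R) :
  (forall a, In a l -> f a = g a) -> lsum l f = lsum l g.
Proof. induction l; simpl; intros H; auto. unfold lsum in *; simpl. rewrite H, IHl; auto. Qed.

Lemma lsum_le {A : Type} (l : list A) (f g : A -> R) :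
  (forall a, In a l -> f a <= g a) -> lsum l f <= lsum l g.
Proof.
  induction l; simpl; intros H; unfold lsum in *; simpl; [lra|].
  apply Rplus_le_compat; auto.
Qed.

Lemma lsum_nonneg {A : Type} (l : list A) (f : A -> R) : (forall a, In a l -> 0 <= f a) -> 0 <= lsum l f.
Proof.
  induction l; unfold lsum in *; simpl; intros H; [lra|].
  apply Rplus_le_le_0_compat; auto.
Qed.

Lemma lsum_plus {A : Type} (l : list A) (f g : A -> R) : lsum l (fun a => f a + g a) = lsum l f + lsum l g.
Proof. induction l; unfold lsum in *; simpl; [ring|]. rewrite IHl. ring. Qed.

Lemma lsum_scal {A : Type} (l : list A) (f : A -> R) (c : R) : lsum l (fun a => c * f a) = c * lsum l f.
Proof. induction l; unfold lsum in *; simpl; [ring|]. rewrite IHl. ring. Qed.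

Lemma lsum_const {A : Type} (l : list A) (c : R) : lsum l (fun _ => c) = INR (length l) * c.
Proof.
  induction l; unfold lsum in *; simpl length; [simpl; ring|].
  rewrite S_INR. simpl. rewrite IHl. ring.
Qed.

Lemma lsum_ge_term {A : Type} (l : list A) (f : A -> R) (a : A) :
  (forall b, In b l -> 0 <= f b) -> In a l -> f a <= lsum l f.
Proof.
  intros Hf Ha. induction l as [|b l IH]; [destruct Ha|]. change (lsum (b :: l) f) with (f b + lsum l f).
  assert (Hl : forall c, In c l -> 0 <= f c) by (intros; apply Hf; simpl; auto).
  pose proof (lsum_nonneg l f Hl). pose proof (Hf b (or_introl eq_refl)).
  destruct Ha as [<-|Ha]; [lra|]. specialize (IH Hl Ha). lra.
Qed.

Lemma lsum_map {A B : Type} (h : B -> A) (l : list B) (f : A -> R) :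
  lsum (map h l) f = lsum l (fun b => f (h b)).
Proof. induction l; [reflexivity|]. unfold lsum in *; simpl; rewrite IHl; ring. Qed.

Lemma lsum_filter {A : Type} (q : A -> bool) (l : list A) (f : A -> R) :
  lsum (filter q l) f = lsum l (fun a => if q a then f a else 0).
Proof. induction l; [reflexivity|]. simpl. destruct (q a); unfold lsum in *; simpl; rewrite IHl; ring. Qed.

Lemma lsum_swap {A B : Type} (l : list A) (l' : list B) (F : A -> B -> R) :
  lsum l (fun a => lsum l' (F a)) = lsum l' (fun b => lsum l (fun a => F a b)).
Proof.
  induction l; unfold lsum in *; simpl.
  - induction l'; simpl; auto. rewrite <- IHl'. ring.
  - rewrite IHl. symmetry. apply (lsum_plus l' (F a)).
Qed.

Lemma lsum_sum_f_R0 {A : Type} (l : list A) (G : A -> nat -> R) (N : nat) :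
  lsum l (fun a => sum_f_R0 (G a) N) = sum_f_R0 (fun y => lsum l (fun a => G a y)) N.
Proof. induction N; simpl; [reflexivity|]. rewrite lsum_plus, IHN. reflexivity. Qed.

(* [sum_d n f] is convertible to [lsum (seq 0 n) f]. *)
Lemma sum_d_ext (n : nat) (f g : nat -> R) : (forall x, (x < n)%nat -> f x = g x) -> sum_d n f = sum_d n g.
Proof. intros H. apply lsum_ext. intros x Hx. apply in_seq in Hx. apply H; lia. Qed.

Lemma sum_d_le (n : nat) (f g : nat -> R) : (forall x, (x < n)%nat -> f x <= g x) -> sum_d n f <= sum_d n g.
Proof. intros H. apply lsum_le. intros x Hx. apply in_seq in Hx. apply H; lia. Qed.

Lemma sum_d_nonneg (n : nat) (f : nat -> R) : (forall x, (x < n)%nat -> 0 <= f x) -> 0 <= sum_d n f.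
Proof. intros H. apply lsum_nonneg. intros x Hx. apply in_seq in Hx. apply H; lia. Qed.

Lemma sum_d_plus (n : nat) (f g : nat -> R) : sum_d n (fun x => f x + g x) = sum_d n f + sum_d n g.
Proof. apply lsum_plus. Qed.

Lemma sum_d_scal (n : nat) (f : nat -> R) (c : R) : sum_d n (fun x => c * f x) = c * sum_d n f.
Proof. apply lsum_scal. Qed.

Lemma sum_d_const (n : nat) (c : R) : sum_d n (fun _ => c) = INR n * c.
Proof. unfold sum_d. fold (lsum (seq 0 n) (fun _ => c)). now rewrite lsum_const, length_seq. Qed.

Definition shift (f : nat -> R) : nat -> R := fun x => f (S x).

Lemma sum_d_S (n : nat) (f : nat -> R) : sum_d (S n) f = f 0%nat + sum_d n (shift f).
Proof.
  unfold sum_d. simpl. f_equal. rewrite <- seq_shift.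
  induction (seq 0 n); simpl; auto. now rewrite IHl.
Qed.

Lemma sum_d_Sr (n : nat) (f : nat -> R) : sum_d (S n) f = sum_d n f + f n.
Proof.
  unfold sum_d. fold (lsum (seq 0 (S n)) f) (lsum (seq 0 n) f).
  rewrite seq_S, lsum_app. unfold lsum at 2. simpl. ring.
Qed.

Fixpoint prod_d (n : nat) (f : nat -> R) : R :=
  match n with
  | O => 1
  | S n' => f 0%nat * prod_d n' (shift f)
  end.

Lemma prod_d_nonneg (n : nat) (f : nat -> R) : (forall x, (x < n)%nat -> 0 <= f x) -> 0 <= prod_d n f.
Proof.
  revert f; induction n; intros f Hf; simpl; [lra|].
  apply Rmult_le_pos; [apply Hf; lia|]. apply IHn. intros; apply Hf; lia.
Qed.

Lemma prod_d_le (n : nat) (f g : nat -> R) :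
  (forall x, (x < n)%nat -> 0 <= f x <= g x) -> prod_d n f <= prod_d n g.
Proof.
  revert f g; induction n; intros f g Hfg; simpl; [lra|].
  assert (H0 := Hfg 0%nat ltac:(lia)).
  assert (0 <= prod_d n (shift f)) by (apply prod_d_nonneg; intros; apply Hfg; lia).
  apply Rmult_le_compat; try lra. apply IHn. intros; apply Hfg; lia.
Qed.

Lemma exp_sum_d (n : nat) (f : nat -> R) : exp (sum_d n f) = prod_d n (fun x => exp (f x)).
Proof.
  revert f; induction n; intros f; [apply exp_0|].
  rewrite sum_d_S, exp_plus, IHn. reflexivity.
Qed.

Lemma exists_argmin (d : nat) (f : nat -> R) : (0 < d)%nat ->
  exists x0, (x0 < d)%nat /\ forall x, (x < d)%nat -> f x0 <= f x.
Proof.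
  induction d; intros Hd; [lia|]. destruct (Nat.eq_dec d 0) as [->|Hd0].
  - exists 0%nat. split; [lia|]. intros x Hx. replace x with 0%nat by lia. lra.
  - destruct (IHd ltac:(lia)) as [x0 [Hx0 Hmin]]. destruct (Rle_dec (f x0) (f d)).
    + exists x0. split; [lia|]. intros x Hx. destruct (Nat.eq_dec x d) as [->|]; auto. apply Hmin; lia.
    + exists d. split; [lia|]. intros x Hx. destruct (Nat.eq_dec x d) as [->|]; [lra|].
      specialize (Hmin x ltac:(lia)). lra.
Qed.

Definition ind {A : Type} (P : A -> Prop) (a : A) : R := if decP P a then 1 else 0.

Lemma decP_spec {A : Type} (P : A -> Prop) (a : A) : decP P a = true <-> P a.
Proof. unfold decP. destruct (excluded_middle_informative (P a)); split; auto; discriminate. Qed.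

Lemma ind_eq_1 {A : Type} (P : A -> Prop) (a : A) : P a -> ind P a = 1.
Proof. unfold ind, decP. destruct (excluded_middle_informative (P a)); tauto. Qed.

Lemma ind_bounds {A : Type} (P : A -> Prop) (a : A) : 0 <= ind P a <= 1.
Proof. unfold ind. destruct (decP P a); lra. Qed.

Lemma count_eq_lsum_ind {A : Type} (P : A -> Prop) (L : list A) :
  INR (length (filter (decP P) L)) = lsum L (ind P).
Proof.
  induction L; [reflexivity|]. unfold lsum in *. simpl. rewrite <- IHL. unfold ind.
  destruct (decP P a); simpl length; [rewrite S_INR|]; ring.
Qed.

Lemma count_mul_le_lsum {A : Type} (L : list A) (P : A -> Prop) (f : A -> R) (t : R) :
  (forall a, In a L -> 0 <= f a) -> (forall a, In a L -> P a -> t <= f a) ->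
  INR (length (filter (decP P) L)) * t <= lsum L f.
Proof.
  intros Hf HP. rewrite count_eq_lsum_ind, Rmult_comm, <- lsum_scal.
  apply lsum_le. intros a Ha. unfold ind. destruct (decP P a) eqn:E.
  - apply (decP_spec P a) in E. rewrite Rmult_1_r. now apply HP.
  - rewrite Rmult_0_r. auto.
Qed.

Lemma count_le_count {A : Type} (L : list A) (P Q : A -> Prop) :
  (forall a, In a L -> P a -> Q a) ->
  INR (length (filter (decP P) L)) <= INR (length (filter (decP Q) L)).
Proof.
  intros HPQ. rewrite <- (Rmult_1_r (INR (length (filter (decP P) L)))), (count_eq_lsum_ind Q).
  apply count_mul_le_lsum; [intros; apply ind_bounds|]. intros a Ha HP. rewrite ind_eq_1; auto; lra.
Qed.

Lemma count_union_bound {A J : Type} (L : list A) (I : list J) (P : A -> Prop) (B : J -> A -> Prop) :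
  (forall a, In a L -> (forall j, In j I -> ~ B j a) -> P a) ->
  INR (length L) <= INR (length (filter (decP P) L)) +
                    lsum I (fun j => INR (length (filter (decP (B j)) L))).
Proof.
  intros Hcover.
  rewrite <- (Rmult_1_r (INR (length L))), <- lsum_const, count_eq_lsum_ind.
  rewrite (lsum_ext I _ (fun j => lsum L (fun a => ind (B j) a))) by (intros; apply count_eq_lsum_ind).
  rewrite <- (lsum_swap L I (fun a j => ind (B j) a)), <- lsum_plus.
  apply lsum_le. intros a Ha.
  destruct (classic (P a)) as [HPa|HPa].
  - rewrite (ind_eq_1 P a HPa).
    pose proof (lsum_nonneg I (fun j => ind (B j) a) (fun j _ => proj1 (ind_bounds (B j) a))). lra.
  - assert (exists j, In j I /\ B j a) as [j [Hj HB]].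
    { apply NNPP. intros Hno. apply HPa, Hcover; auto. intros j Hj HB. apply Hno. eauto. }
    pose proof (lsum_ge_term I (fun j => ind (B j) a) j (fun j _ => proj1 (ind_bounds (B j) a)) Hj) as Hge.
    cbv beta in Hge. rewrite (ind_eq_1 (B j) a HB) in Hge. pose proof (ind_bounds P a). lra.
Qed.

(** * Subsets of a given size and elementary symmetric polynomials *)

Definition subsets_of_size (d k : nat) : list (list bool) :=
  filter (fun H => Nat.eqb (count_occ bool_dec H true) k) (bool_lists d).

Lemma in_subsets_of_size (d k : nat) (H : list bool) :
  In H (subsets_of_size d k) -> length H = d /\ count_occ bool_dec H true = k.
Proof.
  unfold subsets_of_size. intros [Hin Hk]%filter_In. split; [|now apply Nat.eqb_eq].
  clear Hk. revert H Hin. induction d; intros H Hin; simpl in Hin.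
  - now destruct Hin as [<-|[]].
  - apply in_app_or in Hin.
    destruct Hin as [Hin|Hin]; apply in_map_iff in Hin; destruct Hin as [H' [<- Hin]]; simpl; auto.
Qed.

Lemma lsum_subsets_of_size_S (d k : nat) (F : list bool -> R) :
  lsum (subsets_of_size (S d) k) F =
  match k with O => 0 | S k' => lsum (subsets_of_size d k') (fun H => F (true :: H)) end +
  lsum (subsets_of_size d k) (fun H => F (false :: H)).
Proof.
  unfold subsets_of_size. simpl bool_lists.
  rewrite filter_app, lsum_app. destruct k; rewrite !lsum_filter, !lsum_map; simpl count_occ.
  - f_equal. rewrite (lsum_ext _ _ (fun _ => 0)), lsum_const by reflexivity. ring.
  - reflexivity.
Qed.

Fixpoint binom (n k : nat) : R :=
  match n, k with
  | _, O => 1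
  | O, S _ => 0
  | S n', S k' => binom n' k' + binom n' (S k')
  end.

Lemma binom_n_0 (n : nat) : binom n 0 = 1.
Proof. now destruct n. Qed.

Lemma binom_nonneg (n k : nat) : 0 <= binom n k.
Proof.
  revert k; induction n; intros k; destruct k; simpl; try lra.
  pose proof (IHn k); pose proof (IHn (S k)). lra.
Qed.

Lemma binom_pos (n k : nat) : (k <= n)%nat -> 0 < binom n k.
Proof.
  revert k; induction n; intros k Hk; destruct k; simpl; try lra; try lia.
  pose proof (IHn k ltac:(lia)). pose proof (binom_nonneg n (S k)). lra.
Qed.

Lemma binom_gt (n k : nat) : (n < k)%nat -> binom n k = 0.
Proof.
  revert k; induction n; intros k Hk; destruct k; simpl; try lia; auto.
  rewrite !IHn by lia. ring.
Qed.

Lemma binom_absorb (n k : nat) : binom (S n) (S k) * INR (S k) = INR (S n) * binom n k.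
Proof.
  revert k; induction n; intros k.
  - destruct k; [simpl; ring|]. rewrite (binom_gt 0 (S k)) by lia. simpl. ring.
  - destruct k.
    + pose proof (IHn 0%nat) as IH. rewrite binom_n_0 in IH |- *. rewrite S_INR.
      simpl binom in *. simpl INR in *. lra.
    + pose proof (IHn k) as IH1. pose proof (IHn (S k)) as IH2.
      change (binom (S (S n)) (S (S k))) with (binom (S n) (S k) + binom (S n) (S (S k))).
      rewrite (S_INR (S k)) in IH2 |- *. rewrite (S_INR (S n)).
      transitivity (binom (S n) (S k) * INR (S k) + binom (S n) (S k) +
                    binom (S n) (S (S k)) * (INR (S k) + 1)); [ring|].
      rewrite IH1, IH2. simpl binom. rewrite S_INR. ring.
Qed.

Lemma length_subsets_of_size (d k : nat) : INR (length (subsets_of_size d k)) = binom d k.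
Proof.
  rewrite <- (Rmult_1_r (INR _)), <- lsum_const. revert k. induction d; intros k.
  - destruct k; unfold lsum; simpl; ring.
  - rewrite lsum_subsets_of_size_S, IHd. destruct k; simpl; [rewrite binom_n_0|rewrite IHd]; ring.
Qed.

Fixpoint prod_on (H : list bool) (g : nat -> R) : R :=
  match H with
  | [] => 1
  | b :: H' => (if b then g 0%nat else 1) * prod_on H' (shift g)
  end.

Fixpoint esym (d : nat) (v : nat -> R) (t : nat) : R :=
  match d, t with
  | _, O => 1
  | O, S _ => 0
  | S d', S t' => v 0%nat * esym d' (shift v) t' + esym d' (shift v) (S t')
  end.

Lemma esym_0 (d : nat) (v : nat -> R) : esym d v 0 = 1.
Proof. now destruct d. Qed.

Lemma esym_gt (d t : nat) (v : nat -> R) : (d < t)%nat -> esym d v t = 0.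
Proof.
  revert v t; induction d; intros v t Ht; destruct t; simpl; try lia; auto.
  rewrite !IHd by lia. ring.
Qed.

Lemma esym_nonneg (d t : nat) (v : nat -> R) :
  (forall x, (x < d)%nat -> 0 <= v x) -> 0 <= esym d v t.
Proof.
  revert v t; induction d; intros v t Hv; destruct t; simpl; try lra.
  assert (0 <= v 0%nat) by (apply Hv; lia).
  assert (Hs : forall x, (x < d)%nat -> 0 <= shift v x) by (intros; apply Hv; lia).
  pose proof (IHd (shift v) t Hs). pose proof (IHd (shift v) (S t) Hs). nra.
Qed.

Lemma lsum_subsets_of_size_prod_on (d k : nat) (g : nat -> R) :
  lsum (subsets_of_size d k) (fun H => prod_on H g) = esym d g k.
Proof.
  revert k g; induction d; intros k g.
  - destruct k; unfold lsum; simpl; ring.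
  - rewrite lsum_subsets_of_size_S. simpl prod_on.
    rewrite (lsum_ext _ _ (fun H => prod_on H (shift g))) by (intros; ring).
    destruct k; simpl esym; rewrite IHd; [rewrite esym_0; ring|]. now rewrite lsum_scal, IHd.
Qed.

(* The number of k-subsets of a d-set containing a fixed t-subset. *)
Definition supersets (d t k : nat) : R := if Nat.leb t k then binom (d - t) (k - t) else 0.

Lemma supersets_0 (d k : nat) : supersets d 0 k = binom d k.
Proof. unfold supersets. simpl. now rewrite !Nat.sub_0_r. Qed.

Lemma supersets_pascal (d t k : nat) : (t < d)%nat ->
  supersets d t k = supersets d (S t) k + supersets d (S t) (S k).
Proof.
  intros Ht. unfold supersets.
  change (Nat.leb (S t) (S k)) with (Nat.leb t k). change (S k - S t)%nat with (k - t)%nat.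
  destruct (Nat.leb_spec t k); destruct (Nat.leb_spec (S t) k); try lia.
  - replace (d - t)%nat with (S (d - S t)) by lia.
    replace (k - t)%nat with (S (k - S t)) by lia. simpl binom. ring.
  - replace k with t by lia. rewrite Nat.sub_diag, !binom_n_0. ring.
  - ring.
Qed.

Lemma sum_supersets_esym_S_S (d k : nat) (v : nat -> R) :
  sum_d (S (S d)) (fun t => supersets (S d) t (S k) * esym (S d) v t) =
  (1 + v 0%nat) * sum_d (S d) (fun t => supersets d t k * esym d (shift v) t) +
  sum_d (S d) (fun t => supersets d t (S k) * esym d (shift v) t).
Proof.
  set (e := esym d (shift v)).
  rewrite sum_d_S, esym_0, supersets_0.
  change (shift (fun t => supersets (S d) t (S k) * esym (S d) v t))
    with (fun t => supersets d t k * (v 0%nat * e t + e (S t))).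
  rewrite (sum_d_ext _ _ (fun t => v 0%nat * (supersets d t k * e t) + supersets d t k * e (S t)))
    by (intros; ring).
  rewrite sum_d_plus, sum_d_scal.
  assert (Hlow : binom (S d) (S k) + sum_d (S d) (fun t => supersets d t k * e (S t)) =
                 sum_d (S d) (fun t => supersets d t k * e t) +
                 sum_d (S d) (fun t => supersets d t (S k) * e t)).
  { rewrite <- sum_d_plus, (sum_d_S d (fun t => supersets d t k * e t + supersets d t (S k) * e t)).
    rewrite (sum_d_Sr d (fun t => supersets d t k * e (S t))).
    unfold e at 2 3 4. rewrite esym_gt, esym_0, !supersets_0 by lia.
    rewrite (sum_d_ext d _ (shift (fun t => supersets d t k * e t + supersets d t (S k) * e t))).
    - simpl binom. ring.
    - intros t Ht. unfold shift. rewrite (supersets_pascal d t k Ht). ring. }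
  lra.
Qed.

Lemma esym_one_add (d k : nat) (v : nat -> R) :
  esym d (fun x => 1 + v x) k = sum_d (S d) (fun t => supersets d t k * esym d v t).
Proof.
  revert k v; induction d; intros k v.
  - rewrite sum_d_S, supersets_0, esym_0. destruct k; unfold sum_d; simpl; ring.
  - destruct k.
    + rewrite sum_d_S, supersets_0, binom_n_0, !esym_0.
      rewrite (sum_d_ext _ _ (fun _ => 0)), sum_d_const by (intros; unfold shift, supersets; simpl; ring).
      ring.
    + rewrite sum_supersets_esym_S_S, <- !IHd. reflexivity.
Qed.

Lemma esym_generating (d : nat) (v : nat -> R) (p : R) :
  sum_d (S d) (fun t => p ^ t * esym d v t) = prod_d d (fun x => 1 + p * v x).
Proof.
  revert v; induction d; intros v.
  - unfold sum_d. simpl. ring.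
  - simpl prod_d. change (shift (fun x => 1 + p * v x)) with (fun x => 1 + p * shift v x).
    rewrite <- IHd, sum_d_S, esym_0.
    set (e := esym d (shift v)).
    change (shift (fun t => p ^ t * esym (S d) v t))
      with (fun t => p ^ S t * (v 0%nat * e t + e (S t))).
    rewrite (sum_d_ext _ _ (fun t => p * v 0%nat * (p ^ t * e t) + p * (p ^ t * e (S t))))
      by (intros; simpl; ring).
    rewrite sum_d_plus, !sum_d_scal.
    assert (Hshift : sum_d (S d) (fun t => p ^ t * e t) = 1 + p * sum_d (S d) (fun t => p ^ t * e (S t))).
    { assert (Htop : e (S d) = 0) by (apply esym_gt; lia).
      assert (Hbot : e 0%nat = 1) by apply esym_0.
      rewrite sum_d_S, sum_d_Sr, Htop, Hbot, Rmult_0_r, Rplus_0_r, <- sum_d_scal.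
      rewrite (sum_d_ext d (shift _) (fun t => p * (p ^ t * e (S t))))
        by (intros; unfold shift; simpl; ring).
      simpl. ring. }
    fold e. rewrite Hshift. ring.
Qed.

Lemma supersets_nonneg (d t k : nat) : 0 <= supersets d t k.
Proof. unfold supersets. destruct (Nat.leb t k); [apply binom_nonneg|lra]. Qed.

Lemma supersets_step (d t k : nat) : (S t <= k)%nat -> (k <= d)%nat ->
  supersets d (S t) k * INR (d - t) = supersets d t k * INR (k - t).
Proof.
  intros Htk Hkd. unfold supersets.
  replace (Nat.leb (S t) k) with true by (symmetry; apply Nat.leb_le; lia).
  replace (Nat.leb t k) with true by (symmetry; apply Nat.leb_le; lia).
  pose proof (binom_absorb (d - S t) (k - S t)) as Habs.
  replace (S (d - S t)) with (d - t)%nat in Habs by lia.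
  replace (S (k - S t)) with (k - t)%nat in Habs by lia.
  lra.
Qed.

(* A fixed t-set lies inside a uniform k-subset no more often than inside k/d-biased independent draws. *)
Lemma supersets_le (d t k : nat) : (0 < d)%nat -> (k <= d)%nat ->
  supersets d t k <= binom d k * (INR k / INR d) ^ t.
Proof.
  intros Hd Hkd. assert (HdR : 0 < INR d) by (apply lt_0_INR; lia).
  assert (Hp : 0 <= INR k / INR d) by (apply Rdiv_le_0_compat; [apply pos_INR|lra]).
  induction t.
  - rewrite supersets_0. simpl. lra.
  - destruct (Nat.le_gt_cases (S t) k) as [Htk|Htk].
    2:{ unfold supersets. replace (Nat.leb (S t) k) with false by (symmetry; apply Nat.leb_gt; lia).
        apply Rmult_le_pos; [apply binom_nonneg|apply pow_le; lra]. }
    assert (Hdt : 0 < INR (d - t)) by (apply lt_0_INR; lia).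
    assert (Hratio : INR (k - t) / INR (d - t) <= INR k / INR d).
    { apply (Rmult_le_reg_r (INR (d - t) * INR d)); [nra|].
      replace (INR (k - t) / INR (d - t) * (INR (d - t) * INR d)) with (INR (k - t) * INR d) by (field; lra).
      replace (INR k / INR d * (INR (d - t) * INR d)) with (INR k * INR (d - t)) by (field; lra).
      rewrite !minus_INR by lia. apply le_INR in Hkd. pose proof (pos_INR t). nra. }
    replace (supersets d (S t) k) with (supersets d t k * (INR (k - t) / INR (d - t)))
      by (apply (Rmult_eq_reg_r (INR (d - t))); [|lra]; rewrite supersets_step by lia; field; lra).
    simpl pow. rewrite (Rmult_comm (INR k / INR d)), <- Rmult_assoc.
    apply Rmult_le_compat; auto using supersets_nonneg.
    apply Rdiv_le_0_compat; [apply pos_INR|lra].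
Qed.

(* Products over a uniform k-subset are dominated by products over k/d-biased independent draws. *)
Lemma esym_one_add_le (d k : nat) (v : nat -> R) :
  (0 < d)%nat -> (k <= d)%nat -> (forall x, (x < d)%nat -> 0 <= v x) ->
  esym d (fun x => 1 + v x) k <= binom d k * prod_d d (fun x => 1 + INR k / INR d * v x).
Proof.
  intros Hd Hkd Hv. rewrite esym_one_add, <- esym_generating, <- sum_d_scal.
  apply sum_d_le. intros t _. rewrite <- Rmult_assoc.
  apply Rmult_le_compat_r; [now apply esym_nonneg|]. now apply supersets_le.
Qed.

(** * Hoeffding's inequality for half subsets *)

Definition sum_on (b : bool) (H : list bool) (f : nat -> R) : R :=
  sum_d (length H) (fun x => if Bool.eqb (memH H x) b then f x else 0).

Lemma sum_on_cons (b b' : bool) (H : list bool) (f : nat -> R) :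
  sum_on b (b' :: H) f = (if Bool.eqb b' b then f 0%nat else 0) + sum_on b H (shift f).
Proof. unfold sum_on. simpl length. now rewrite sum_d_S. Qed.

Lemma sum_on_nonneg (b : bool) (H : list bool) (f : nat -> R) :
  (forall x, (x < length H)%nat -> 0 <= f x) -> 0 <= sum_on b H f.
Proof.
  intros Hf. apply sum_d_nonneg. intros x Hx. destruct (Bool.eqb _ _); [now apply Hf|lra].
Qed.

Lemma sum_on_add_negb (b : bool) (H : list bool) (f : nat -> R) :
  sum_on b H f + sum_on (negb b) H f = sum_d (length H) f.
Proof.
  unfold sum_on. rewrite <- sum_d_plus. apply sum_d_ext. intros x _.
  destruct b, (memH H x); simpl; ring.
Qed.

Lemma sum_on_scal (b : bool) (H : list bool) (f : nat -> R) (c : R) :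
  sum_on b H (fun x => c * f x) = c * sum_on b H f.
Proof.
  unfold sum_on. rewrite <- sum_d_scal. apply sum_d_ext. intros x _.
  destruct (Bool.eqb _ _); ring.
Qed.

Lemma sum_on_add_const (b : bool) (H : list bool) (f : nat -> R) (a : R) :
  sum_on b H (fun x => f x + a) = sum_on b H f + a * sum_on b H (fun _ => 1).
Proof.
  unfold sum_on. rewrite <- sum_d_scal, <- sum_d_plus. apply sum_d_ext. intros x _.
  destruct (Bool.eqb _ _); ring.
Qed.

Lemma sum_on_true_one (H : list bool) : sum_on true H (fun _ => 1) = INR (count_occ bool_dec H true).
Proof.
  induction H as [|b H IH]; [reflexivity|]. rewrite sum_on_cons. unfold shift. rewrite IH.
  destruct b; cbn -[INR]; [rewrite S_INR|]; ring.
Qed.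

Lemma count_positions (b : bool) (H : list bool) :
  INR (length (filter (fun x => Bool.eqb (memH H x) b) (seq 0 (length H)))) = sum_on b H (fun _ => 1).
Proof.
  rewrite <- (Rmult_1_r (INR _)), <- lsum_const, lsum_filter. reflexivity.
Qed.

Lemma sum_on_negb (H : list bool) (f : nat -> R) : sum_on false H f = sum_on true (map negb H) f.
Proof.
  revert f; induction H as [|b H IH]; intros f; [reflexivity|].
  simpl map. rewrite !sum_on_cons, IH. now destruct b.
Qed.

Lemma exp_sum_on (H : list bool) (f : nat -> R) : exp (sum_on true H f) = prod_on H (fun x => exp (f x)).
Proof.
  revert f; induction H as [|b H IH]; intros f; [apply exp_0|].
  rewrite sum_on_cons, exp_plus, IH. destruct b; simpl; [|rewrite exp_0]; reflexivity.
Qed.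

(* Pass to independent fair coins (esym_one_add_le), then apply Hoeffding's lemma coordinatewise. *)
Lemma half_subsets_mgf_le (d m : nat) (z : nat -> R) (M : R) :
  d = (2 * m)%nat -> (0 < m)%nat -> (forall x, (x < d)%nat -> 0 <= z x <= M) ->
  lsum (subsets_of_size d m) (fun H => exp (sum_on true H z)) <=
  binom d m * exp (sum_d d z / 2 + INR d * M ^ 2 / 8).
Proof.
  intros Hdm Hm Hz.
  assert (Hhalf : INR m / INR d = 1 / 2)
    by (rewrite Hdm, mult_INR; simpl; field; apply not_0_INR; lia).
  rewrite (lsum_ext _ _ (fun H => prod_on H (fun x => 1 + (exp (z x) - 1))))
    by (intros H _; rewrite exp_sum_on; f_equal; apply functional_extensionality; intros; ring).
  rewrite lsum_subsets_of_size_prod_on.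
  eapply Rle_trans; [apply esym_one_add_le; try lia|].
  { intros x Hx. pose proof (exp_ineq1_le (z x)). pose proof (Hz x Hx). lra. }
  apply Rmult_le_compat_l; [apply binom_nonneg|]. rewrite Hhalf.
  eapply Rle_trans.
  - apply (prod_d_le d _ (fun x => exp (z x / 2 + z x * z x / 8))).
    intros x Hx. pose proof (hoeffding_fair_coin (z x)). pose proof (exp_pos (z x)). split; lra.
  - rewrite <- exp_sum_d. apply exp_le_exp_compat.
    apply Rle_trans with (sum_d d (fun x => / 2 * z x + M ^ 2 / 8)).
    + apply sum_d_le. intros x Hx. pose proof (Hz x Hx). assert (z x * z x <= M ^ 2) by nra. lra.
    + rewrite sum_d_plus, sum_d_scal, sum_d_const. lra.
Qed.

Lemma half_subsets_tail (d m : nat) (z : nat -> R) (M t : R) :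
  d = (2 * m)%nat -> (0 < m)%nat -> 0 < M -> 0 <= t ->
  (forall x, (x < d)%nat -> 0 <= z x <= M) ->
  INR (length (filter (decP (fun H => sum_d d z / 2 + t < sum_on true H z)) (subsets_of_size d m)))
    <= binom d m * exp (- (2 * t ^ 2) / (INR d * M ^ 2)).
Proof.
  intros Hdm Hm HM Ht Hz.
  assert (HdR : 0 < INR d) by (apply lt_0_INR; lia).
  set (lam := 4 * t / (INR d * M ^ 2)).
  assert (Hlam : 0 <= lam)
    by (apply Rdiv_le_0_compat; [lra|]; apply Rmult_lt_0_compat; [lra|apply pow_lt; lra]).
  set (N := INR (length (filter (decP (fun H => sum_d d z / 2 + t < sum_on true H z))
                                (subsets_of_size d m)))).
  assert (Hchernoff : N * exp (lam * (sum_d d z / 2 + t)) <=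
                      lsum (subsets_of_size d m) (fun H => exp (sum_on true H (fun x => lam * z x)))).
  { apply count_mul_le_lsum; [intros; left; apply exp_pos|].
    intros H _ HP. rewrite sum_on_scal. apply exp_le_exp_compat, Rmult_le_compat_l; lra. }
  assert (Hmgf := half_subsets_mgf_le d m (fun x => lam * z x) (lam * M) Hdm Hm).
  rewrite sum_d_scal in Hmgf.
  assert (Hbound : N * exp (lam * (sum_d d z / 2 + t)) <=
                   binom d m * exp (lam * sum_d d z / 2 + INR d * (lam * M) ^ 2 / 8)).
  { eapply Rle_trans; [apply Hchernoff|]. apply Hmgf.
    intros x Hx. pose proof (Hz x Hx). split; [apply Rmult_le_pos|apply Rmult_le_compat_l]; lra. }
  apply (Rmult_le_reg_r (exp (lam * (sum_d d z / 2 + t)))); [apply exp_pos|].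
  eapply Rle_trans; [apply Hbound|]. rewrite Rmult_assoc, <- exp_plus.
  apply Req_le. do 2 f_equal. unfold lam. field. split; lra.
Qed.

Lemma half_subsets_concentration_pos (d m : nat) (c : nat -> R) (a K w : R) :
  d = (2 * m)%nat -> (0 < m)%nat -> 1 < K -> 0 <= w -> 0 < a ->
  (forall x, (x < d)%nat -> a <= c x <= K * a) ->
  INR (length (filter (decP (fun H => sum_d d c / 2 * (1 + w) < sum_on true H c)) (subsets_of_size d m)))
    <= binom d m * exp (- (INR d * w ^ 2) / (2 * (K - 1) ^ 2)).
Proof.
  intros Hdm Hm HK Hw Ha Hbounds.
  assert (HdR : INR d = 2 * INR m) by (rewrite Hdm, mult_INR; simpl; ring).
  assert (HmR : 0 < INR m) by (apply lt_0_INR; lia).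
  set (T := sum_d d c).
  assert (HT : 0 <= T) by (apply sum_d_nonneg; intros x Hx; pose proof (Hbounds x Hx); lra).
  assert (HaT : INR d * a <= T).
  { rewrite <- sum_d_const. apply sum_d_le. intros x Hx. apply Hbounds, Hx. }
  set (z x := c x - a).
  assert (Hz : forall x, (x < d)%nat -> 0 <= z x <= (K - 1) * a).
  { intros x Hx. pose proof (Hbounds x Hx). unfold z. nra. }
  assert (Hsumz : sum_d d z = T - INR d * a).
  { unfold z, Rminus. rewrite sum_d_plus, sum_d_const. fold T. ring. }
  apply Rle_trans with (INR (length (filter (decP (fun H => sum_d d z / 2 + w * T / 2 < sum_on true H z))
                                            (subsets_of_size d m)))).
  - apply count_le_count. intros H HH Hbig.
    destruct (in_subsets_of_size d m H HH) as [_ Hcount].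
    assert (Hc_z : sum_on true H c = sum_on true H z + a * INR m).
    { rewrite <- Hcount, <- sum_on_true_one, <- sum_on_add_const. f_equal.
      apply functional_extensionality. intros x. unfold z. ring. }
    fold T in Hbig. rewrite Hsumz, HdR. lra.
  - eapply Rle_trans.
    + apply (half_subsets_tail d m z ((K - 1) * a) (w * T / 2)); auto.
      * apply Rmult_lt_0_compat; lra.
      * apply Rmult_le_pos; [apply Rmult_le_pos|]; lra.
    + apply Rmult_le_compat_l; [apply binom_nonneg|].
      apply exp_le_exp_compat, tail_exponent_le; auto. lra.
Qed.

Lemma half_subsets_concentration (d m : nat) (c : nat -> R) (K w : R) :
  d = (2 * m)%nat -> (0 < m)%nat -> 1 < K -> 0 <= w ->
  (forall x, (x < d)%nat -> 0 <= c x) ->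
  (forall x x', (x < d)%nat -> (x' < d)%nat -> c x <= K * c x') ->
  INR (length (filter (decP (fun H => sum_d d c / 2 * (1 + w) < sum_on true H c)) (subsets_of_size d m)))
    <= binom d m * exp (- (INR d * w ^ 2) / (2 * (K - 1) ^ 2)).
Proof.
  intros Hdm Hm HK Hw Hc HcK.
  destruct (exists_argmin d c) as [x0 [Hx0 Hmin]]; [lia|].
  destruct (Rle_lt_or_eq_dec 0 (c x0) (Hc x0 Hx0)) as [Hpos|Hzero].
  - apply (half_subsets_concentration_pos d m c (c x0)); auto.
  - apply Rle_trans with 0; [|apply Rmult_le_pos; [apply binom_nonneg|left; apply exp_pos]].
    assert (Hvanish : forall x, (x < d)%nat -> c x = 0).
    { intros x Hx. pose proof (HcK x x0 Hx Hx0). pose proof (Hc x Hx). rewrite <- Hzero in *. lra. }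
    assert (Hnone : INR (length (filter (decP (fun H => sum_d d c / 2 * (1 + w) < sum_on true H c))
                                        (subsets_of_size d m))) * 1
                    <= lsum (subsets_of_size d m) (fun _ => 0)).
    { apply count_mul_le_lsum; [intros; lra|]. intros H HH Hbig. exfalso.
      destruct (in_subsets_of_size d m H HH) as [Hlen _].
      assert (Hon : sum_on true H c = 0).
      { unfold sum_on. rewrite (sum_d_ext _ _ (fun _ => 0)), sum_d_const; [ring|].
        intros x Hx. rewrite Hlen in Hx. rewrite Hvanish by auto. now destruct (Bool.eqb _ _). }
      rewrite (sum_d_ext _ _ (fun _ => 0)), sum_d_const, Hon in Hbig by auto. lra. }
    rewrite lsum_const in Hnone. lra.
Qed.

Lemma lsum_bool_lists_map_negb (d : nat) (F : list bool -> R) :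
  lsum (bool_lists d) F = lsum (bool_lists d) (fun H => F (map negb H)).
Proof.
  revert F; induction d; intros F; [reflexivity|]. simpl bool_lists.
  rewrite !lsum_app, !lsum_map, (IHd (fun H => F (true :: H))), (IHd (fun H => F (false :: H))).
  simpl. ring.
Qed.

Lemma count_occ_map_negb (H : list bool) :
  count_occ bool_dec (map negb H) true = (length H - count_occ bool_dec H true)%nat.
Proof.
  induction H as [|b H IH]; [reflexivity|]. pose proof (count_occ_bound bool_dec true H).
  destruct b; simpl map; simpl length.
  - rewrite count_occ_cons_neq, count_occ_cons_eq by easy. lia.
  - rewrite count_occ_cons_eq, count_occ_cons_neq by easy. lia.
Qed.

(* Complementation maps the half subsets of [d] onto themselves. *)
Lemma count_half_subsets_map_negb (d m : nat) (P : list bool -> Prop) : d = (2 * m)%nat ->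
  INR (length (filter (decP P) (subsets_of_size d m))) =
  INR (length (filter (decP (fun H => P (map negb H))) (subsets_of_size d m))).
Proof.
  intros Hdm. rewrite !count_eq_lsum_ind. unfold subsets_of_size. rewrite !lsum_filter.
  rewrite lsum_bool_lists_map_negb. apply lsum_ext. intros H HH.
  assert (Hlen : length H = d) by (apply (in_subsets_of_size d (count_occ bool_dec H true)), filter_In;
                                   split; auto; apply Nat.eqb_refl).
  pose proof (count_occ_bound bool_dec true H).
  rewrite count_occ_map_negb, Hlen.
  replace (Nat.eqb (d - count_occ bool_dec H true) m) with (Nat.eqb (count_occ bool_dec H true) m);
    [reflexivity|].
  destruct (Nat.eqb_spec (count_occ bool_dec H true) m), (Nat.eqb_spec (d - count_occ bool_dec H true) m);
    auto; lia.
Qed.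

Lemma half_subsets_concentration_on (b : bool) (d m : nat) (c : nat -> R) (K w : R) :
  d = (2 * m)%nat -> (0 < m)%nat -> 1 < K -> 0 <= w ->
  (forall x, (x < d)%nat -> 0 <= c x) ->
  (forall x x', (x < d)%nat -> (x' < d)%nat -> c x <= K * c x') ->
  INR (length (filter (decP (fun H => sum_d d c / 2 * (1 + w) < sum_on b H c)) (subsets_of_size d m)))
    <= binom d m * exp (- (INR d * w ^ 2) / (2 * (K - 1) ^ 2)).
Proof.
  intros Hdm Hm HK Hw Hc HcK. destruct b; [now apply half_subsets_concentration|].
  rewrite (count_half_subsets_map_negb d m _ Hdm).
  eapply Rle_trans; [|apply (half_subsets_concentration d m c K w); auto].
  apply count_le_count. intros H _.
  rewrite sum_on_negb, map_map, (map_ext _ (fun b => b)), map_id; auto using negb_involutive.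
Qed.

(** * Privacy from the excess mass *)

Lemma sum_f_R0_le_infinite_sum (f : nat -> R) (l : R) (N : nat) :
  (forall k, 0 <= f k) -> infinite_sum f l -> sum_f_R0 f N <= l.
Proof. intros Hf Hl. now apply sum_incr. Qed.

Lemma infinite_sum_nonneg (f : nat -> R) (l : R) : (forall k, 0 <= f k) -> infinite_sum f l -> 0 <= l.
Proof.
  intros Hf Hl. pose proof (sum_f_R0_le_infinite_sum f l 0 Hf Hl). simpl in *.
  pose proof (Hf 0%nat). lra.
Qed.

Lemma infinite_sum_le (f : nat -> R) (l C : R) :
  infinite_sum f l -> (forall N, sum_f_R0 f N <= C) -> l <= C.
Proof.
  intros Hl HC. apply Rnot_lt_le. intros Hlt.
  destruct (Hl (l - C)) as [N HN]; [lra|].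
  specialize (HN N (Nat.le_refl N)). specialize (HC N).
  unfold Rdist in HN. apply Rabs_def2 in HN. lra.
Qed.

Lemma sum_f_R0_nondecreasing (f : nat -> R) (N N' : nat) :
  (forall k, 0 <= f k) -> (N <= N')%nat -> sum_f_R0 f N <= sum_f_R0 f N'.
Proof. intros Hf Hle. induction Hle; [lra|]. simpl. pose proof (Hf (S m)). lra. Qed.

Lemma uniform_index {A : Type} (L : list A) (F : A -> nat -> R) (c : R) :
  (forall a N N', In a L -> (N <= N')%nat -> F a N <= F a N') ->
  exists N0, forall a, In a L -> (exists N, c < F a N) -> c < F a N0.
Proof.
  intros Hmono. induction L as [|a L IH].
  - exists 0%nat. intros a [].
  - destruct IH as [N1 HN1]; [intros; apply Hmono; simpl; auto|].
    destruct (classic (exists N, c < F a N)) as [[Na HNa]|Hnone].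
    + exists (max N1 Na). intros a' [<-|Hin] Hex.
      * apply Rlt_le_trans with (F a Na); auto. apply Hmono; simpl; auto; lia.
      * apply Rlt_le_trans with (F a' N1); auto. apply Hmono; simpl; auto; lia.
    + exists N1. intros a' [<-|Hin] Hex; [contradiction|auto].
Qed.

Lemma sum_f_R0_restrict_singleton (p : nat -> R) (y N : nat) :
  sum_f_R0 (restrict p (fun z => z = y)) N = if Nat.leb y N then p y else 0.
Proof.
  unfold restrict. induction N; simpl.
  - destruct y as [|y]; simpl; destruct (excluded_middle_informative _); congruence.
  - rewrite IHN. destruct (excluded_middle_informative (S N = y)) as [<-|Hne].
    + rewrite Nat.leb_refl. replace (Nat.leb (S N) N) with false by (symmetry; apply Nat.leb_gt; lia). ring.
    + destruct (Nat.leb_spec y N), (Nat.leb_spec y (S N)); try lia; ring.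
Qed.

Lemma PrIs_singleton (p : nat -> R) (y : nat) : PrIs p (fun z => z = y) (p y).
Proof.
  intros e He. exists y. intros N HN.
  rewrite sum_f_R0_restrict_singleton. replace (Nat.leb y N) with true by (symmetry; apply Nat.leb_le; lia).
  unfold Rdist. rewrite Rminus_diag, Rabs_R0. lra.
Qed.

Lemma private_pointwise_ratio (d : nat) (Rz : nat -> nat -> R) (eps : R) :
  private (in_range d) Rz eps 0 ->
  forall x x' y, (x < d)%nat -> (x' < d)%nat -> Rz x y <= exp eps * Rz x' y.
Proof.
  intros Hpriv x x' y Hx Hx'.
  pose proof (Hpriv x x' Hx Hx' (fun z => z = y) _ _ (PrIs_singleton _ y) (PrIs_singleton _ y)). lra.
Qed.

Definition excess (e : R) (p q : nat -> R) (y : nat) : R :=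
  if Rlt_dec (e * q y) (p y) then p y else 0.

Lemma PrIs_le_of_excess (p q : nat -> R) (S : nat -> Prop) (e delta a b : R) :
  0 <= e -> (forall y, 0 <= p y) -> (forall y, 0 <= q y) ->
  (forall N, sum_f_R0 (excess e p q) N <= delta) ->
  PrIs p S a -> PrIs q S b -> a <= e * b + delta.
Proof.
  intros He Hp Hq Hex Ha Hb. apply (infinite_sum_le _ a _ Ha). intros N.
  assert (Hrq : forall y, 0 <= restrict q S y).
  { intros y. unfold restrict. destruct (excluded_middle_informative (S y)); auto; lra. }
  apply Rle_trans with (sum_f_R0 (fun y => restrict q S y * e + excess e p q y) N).
  - apply sum_Rle. intros y _. unfold restrict, excess.
    pose proof (Hp y). pose proof (Hq y).
    destruct (excluded_middle_informative (S y)), (Rlt_dec (e * q y) (p y)); nra.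
  - rewrite plus_sum, <- scal_sum. pose proof (Hex N).
    pose proof (sum_f_R0_le_infinite_sum _ b N Hrq Hb). nra.
Qed.

Lemma private_of_excess (Q : bool -> nat -> R) (e delta : R) :
  0 <= e -> 0 <= delta -> (forall b y, 0 <= Q b y) ->
  (forall b N, sum_f_R0 (excess (exp e) (Q b) (Q (negb b))) N <= delta) ->
  private (fun _ => True) Q e delta.
Proof.
  intros He Hdelta HQ Hex x x' _ _ S a b Ha Hb.
  assert (Hexp : 1 <= exp e) by (rewrite <- exp_0; now apply exp_le_exp_compat).
  destruct (bool_dec x x') as [<-|Hne].
  - assert (a = b) as <- by (eapply uniqueness_sum; eauto).
    assert (0 <= a).
    { apply (infinite_sum_nonneg (restrict (Q x) S)); auto.
      intros y. unfold restrict. destruct (excluded_middle_informative (S y)); auto; lra. }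
    nra.
  - replace x' with (negb x) in Hb by (destruct x, x'; simpl; congruence).
    apply (PrIs_le_of_excess (Q x) (Q (negb x)) S); auto. left; apply exp_pos.
Qed.

Section HalfSubsetRandomizer.
Variables (d m : nat) (Rz : nat -> nat -> R) (K eps' delta w : R).
Hypothesis Hdm : d = (2 * m)%nat.
Hypothesis Hm : (0 < m)%nat.
Hypothesis HRz : randomizer d Rz.
Hypothesis Hratio : forall x x' y, (x < d)%nat -> (x' < d)%nat -> Rz x y <= K * Rz x' y.
Hypothesis HK : 1 < K.
Hypothesis Hw : 0 <= w.
Hypothesis Hslack : 1 + w <= exp eps' * (1 - w).

Lemma sum_on_one_half (b : bool) (H : list bool) :
  In H (subsets_of_size d m) -> sum_on b H (fun _ => 1) = INR m.
Proof.
  intros HH. destruct (in_subsets_of_size d m H HH) as [Hlen Hcount].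
  assert (Htrue : sum_on true H (fun _ => 1) = INR m) by now rewrite sum_on_true_one, Hcount.
  destruct b; auto.
  pose proof (sum_on_add_negb true H (fun _ => 1)) as Hsplit.
  rewrite sum_d_const, Hlen, Hdm, mult_INR in Hsplit. simpl in Hsplit. lra.
Qed.

Lemma mixture_half_subset (H : list bool) (b : bool) (y : nat) :
  In H (subsets_of_size d m) -> mixture d H b Rz y = sum_on b H (fun x => Rz x y) / INR m.
Proof.
  intros HH. destruct (in_subsets_of_size d m H HH) as [Hlen _].
  unfold mixture. rewrite <- Hlen, count_positions, sum_on_one_half by auto. reflexivity.
Qed.

Lemma randomizer_nonneg (x y : nat) : (x < d)%nat -> 0 <= Rz x y.
Proof. intros Hx. apply (HRz x Hx). Qed.

Lemma mixture_nonneg (H : list bool) (b : bool) (y : nat) :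
  In H (subsets_of_size d m) -> 0 <= mixture d H b Rz y.
Proof.
  intros HH. rewrite mixture_half_subset by auto. apply Rdiv_le_0_compat; [|apply lt_0_INR; lia].
  destruct (in_subsets_of_size d m H HH) as [Hlen _].
  apply sum_on_nonneg. rewrite Hlen. intros; now apply randomizer_nonneg.
Qed.

Definition leaks (H : list bool) (b : bool) : Prop :=
  exists N, delta < sum_f_R0 (excess (exp eps') (mixture d H b Rz) (mixture d H (negb b) Rz)) N.

Lemma private_Q_HR_of_not_leaks (H : list bool) :
  In H (subsets_of_size d m) -> 0 <= eps' -> 0 <= delta -> (forall b, ~ leaks H b) ->
  private (fun _ => True) (Q_HR d H Rz) eps' delta.
Proof.
  intros HH Heps' Hdelta Hnot. apply private_of_excess; auto.
  - intros b y. now apply mixture_nonneg.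
  - intros b N. apply Rnot_lt_le. intros Hlt. apply (Hnot b). now exists N.
Qed.

Lemma excess_le_ind (H : list bool) (b : bool) (y : nat) :
  In H (subsets_of_size d m) ->
  excess (exp eps') (mixture d H b Rz) (mixture d H (negb b) Rz) y <=
  sum_d d (fun x => Rz x y) / INR m *
  ind (fun H => sum_d d (fun x => Rz x y) / 2 * (1 + w) < sum_on b H (fun x => Rz x y)) H.
Proof.
  intros HH. destruct (in_subsets_of_size d m H HH) as [Hlen _].
  assert (HmR : 0 < INR m) by (apply lt_0_INR; lia).
  assert (Hnn : forall b', 0 <= sum_on b' H (fun x => Rz x y))
    by (intros; apply sum_on_nonneg; rewrite Hlen; intros; now apply randomizer_nonneg).
  pose proof (sum_on_add_negb b H (fun x => Rz x y)) as Hsplit. rewrite Hlen in Hsplit.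
  assert (HT : 0 <= sum_d d (fun x => Rz x y)) by (pose proof (Hnn b); pose proof (Hnn (negb b)); lra).
  unfold excess. rewrite !mixture_half_subset by auto.
  destruct (Rlt_dec _ _) as [Hlt|_].
  - rewrite ind_eq_1, Rmult_1_r.
    + apply Rmult_le_compat_r; [left; now apply Rinv_0_lt_compat|]. pose proof (Hnn (negb b)). lra.
    + assert (Hbeat : exp eps' * sum_on (negb b) H (fun x => Rz x y) < sum_on b H (fun x => Rz x y)).
      { unfold Rdiv in Hlt. rewrite <- Rmult_assoc in Hlt.
        apply Rmult_lt_reg_r in Hlt; auto. now apply Rinv_0_lt_compat. }
      apply (imbalance_of_ratio _ _ _ _ _ (Hnn (negb b)) Hsplit HT (Rlt_le _ _ (exp_pos eps')) Hslack Hbeat).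
  - apply Rmult_le_pos; [apply Rdiv_le_0_compat; auto|apply ind_bounds].
Qed.

Lemma lsum_excess_le (b : bool) (y : nat) :
  lsum (subsets_of_size d m) (fun H => excess (exp eps') (mixture d H b Rz) (mixture d H (negb b) Rz) y) <=
  sum_d d (fun x => Rz x y) / INR m * (binom d m * exp (- (INR d * w ^ 2) / (2 * (K - 1) ^ 2))).
Proof.
  eapply Rle_trans; [apply lsum_le; intros H HH; now apply excess_le_ind|].
  rewrite lsum_scal, <- count_eq_lsum_ind. apply Rmult_le_compat_l.
  - apply Rdiv_le_0_compat; [|apply lt_0_INR; lia]. apply sum_d_nonneg. intros; now apply randomizer_nonneg.
  - apply half_subsets_concentration_on; auto using randomizer_nonneg.
Qed.

Lemma sum_f_R0_sum_d_le (N : nat) : sum_f_R0 (fun y => sum_d d (fun x => Rz x y)) N <= INR d.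
Proof.
  change (sum_f_R0 (fun y => lsum (seq 0 d) (fun x => Rz x y)) N <= INR d).
  rewrite <- lsum_sum_f_R0. apply Rle_trans with (lsum (seq 0 d) (fun _ => 1)).
  - apply lsum_le. intros x Hx. apply in_seq in Hx. destruct (HRz x ltac:(lia)) as [Hnn Hsum].
    now apply sum_f_R0_le_infinite_sum.
  - rewrite lsum_const, length_seq. lra.
Qed.

Lemma count_leaks_le (b : bool) :
  INR (length (filter (decP (fun H => leaks H b)) (subsets_of_size d m))) * delta <=
  2 * (binom d m * exp (- (INR d * w ^ 2) / (2 * (K - 1) ^ 2))).
Proof.
  set (g H := excess (exp eps') (mixture d H b Rz) (mixture d H (negb b) Rz)).
  set (C := binom d m * exp (- (INR d * w ^ 2) / (2 * (K - 1) ^ 2))).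
  assert (Hg : forall H y, In H (subsets_of_size d m) -> 0 <= g H y).
  { intros H y HH. unfold g, excess. destruct (Rlt_dec _ _); [now apply mixture_nonneg|lra]. }
  (* One truncation level N0 detects the leak of every one of the finitely many H. *)
  destruct (uniform_index (subsets_of_size d m) (fun H N => sum_f_R0 (g H) N) delta) as [N0 HN0].
  { intros H N N' HH Hle. apply sum_f_R0_nondecreasing; auto. }
  eapply Rle_trans.
  { apply count_mul_le_lsum with (f := fun H => sum_f_R0 (g H) N0).
    - intros H HH. apply cond_pos_sum. intros; auto.
    - intros H HH Hleak. left. apply HN0; auto. }
  rewrite lsum_sum_f_R0.
  assert (HmR : 0 < INR m) by (apply lt_0_INR; lia).
  assert (HC : 0 <= C) by (apply Rmult_le_pos; [apply binom_nonneg|left; apply exp_pos]).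
  apply Rle_trans with (sum_f_R0 (fun y => sum_d d (fun x => Rz x y) * (C / INR m)) N0).
  { apply sum_Rle. intros y _.
    apply Rle_trans with (sum_d d (fun x => Rz x y) / INR m * C); [apply lsum_excess_le|].
    right. unfold Rdiv. ring. }
  rewrite <- scal_sum.
  pose proof (sum_f_R0_sum_d_le N0) as Hmass.
  replace (INR d) with (2 * INR m) in Hmass by (rewrite Hdm, mult_INR; simpl; ring).
  assert (HCm : 0 <= C / INR m) by (apply Rdiv_le_0_compat; auto).
  replace (2 * C) with (C / INR m * (2 * INR m)) by (field; lra).
  now apply Rmult_le_compat_l.
Qed.

End HalfSubsetRandomizer.

Definition eps_prime (eps delta : R) (d n : nat) : R :=
  (exp (2 * eps) - 1) * sqrt (16 / INR d * ln (24 * exp eps * INR n / delta)).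

(* With L0 := ln (12 e^eps n / delta) > ln 2, the logarithm in eps_prime is ln 2 + L0 <= 2 L0. *)
Lemma ln_24_le_2_ln_12 (eps delta : R) (n : nat) : 0 < eps -> 0 < delta < 1 -> (0 < n)%nat ->
  0 < ln (24 * exp eps * INR n / delta) <= 2 * ln (12 * exp eps * INR n / delta).
Proof.
  intros Heps Hdelta Hn. assert (HnR : 1 <= INR n) by (apply (le_INR 1); lia).
  pose proof (exp_gt_1 eps Heps).
  assert (H12 : 2 < 12 * exp eps * INR n / delta).
  { apply Rlt_div_r; [lra|]. nra. }
  assert (Hln2 : 0 < ln 2) by (rewrite <- ln_1; apply ln_increasing; lra).
  assert (ln 2 < ln (12 * exp eps * INR n / delta)) by (apply ln_increasing; lra).
  replace (24 * exp eps * INR n / delta) with (2 * (12 * exp eps * INR n / delta)) by (field; lra).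
  rewrite ln_mult by lra. lra.
Qed.

Lemma eps_prime_bounds (eps delta : R) (d n : nat) : 0 < eps -> 0 < delta < 1 -> (0 < n)%nat ->
  INR d > 4 * (exp (2 * eps) - 1) ^ 2 * ln (12 * exp eps * INR n / delta) ->
  0 < INR d /\ 0 < eps_prime eps delta d n <= 3.
Proof.
  intros Heps Hdelta Hn Hd. unfold eps_prime.
  pose proof (ln_24_le_2_ln_12 eps delta n Heps Hdelta Hn) as [HL HL0].
  set (L := ln (24 * exp eps * INR n / delta)) in *.
  set (L0 := ln (12 * exp eps * INR n / delta)) in *.
  assert (HE : 0 < exp (2 * eps) - 1) by (pose proof (exp_gt_1 (2 * eps)); lra).
  assert (HE2 : 0 < (exp (2 * eps) - 1) ^ 2) by (apply pow_lt; lra).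
  assert (HdR : 0 < INR d) by nra.
  assert (Hs2 : sqrt (16 / INR d * L) ^ 2 = 16 / INR d * L)
    by (apply pow2_sqrt, Rmult_le_pos; [apply Rdiv_le_0_compat|]; lra).
  assert (Hs : 0 < sqrt (16 / INR d * L))
    by (apply sqrt_lt_R0, Rmult_lt_0_compat; [apply Rdiv_lt_0_compat|]; lra).
  assert (Hsq : ((exp (2 * eps) - 1) * sqrt (16 / INR d * L)) ^ 2 < 9).
  { rewrite Rpow_mult_distr, Hs2.
    apply (Rmult_lt_reg_r (INR d)); auto.
    replace ((exp (2 * eps) - 1) ^ 2 * (16 / INR d * L) * INR d) with ((exp (2 * eps) - 1) ^ 2 * 16 * L)
      by (field; lra).
    nra. }
  repeat split; auto; [apply Rmult_lt_0_compat; lra|nra].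
Qed.

Lemma tail_le_delta (eps delta : R) (d n : nat) : 0 < eps -> 0 < delta < 1 -> (0 < n)%nat -> 0 < INR d ->
  exp (- (INR d * (eps_prime eps delta d n / 5) ^ 2) / (2 * (exp eps - 1) ^ 2))
    <= delta / (24 * exp eps * INR n).
Proof.
  intros Heps Hdelta Hn HdR. unfold eps_prime.
  pose proof (ln_24_le_2_ln_12 eps delta n Heps Hdelta Hn) as [HL _].
  set (L := ln (24 * exp eps * INR n / delta)) in *.
  set (K := exp eps).
  assert (HK : 1 < K) by now apply exp_gt_1.
  assert (Hs2 : sqrt (16 / INR d * L) ^ 2 = 16 / INR d * L)
    by (apply pow2_sqrt, Rmult_le_pos; [apply Rdiv_le_0_compat|]; lra).
  assert (HnR : 0 < INR n) by (apply lt_0_INR; lia).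
  assert (Hexp : - (INR d * ((exp (2 * eps) - 1) * sqrt (16 / INR d * L) / 5) ^ 2) / (2 * (K - 1) ^ 2)
                 = - (16 * L * (K + 1) ^ 2 / 50)).
  { replace (exp (2 * eps)) with (K * K) by (unfold K; rewrite <- exp_plus; f_equal; ring).
    replace (((K * K - 1) * sqrt (16 / INR d * L) / 5) ^ 2)
      with ((K * K - 1) ^ 2 * sqrt (16 / INR d * L) ^ 2 / 25) by field.
    rewrite Hs2. field. split; lra. }
  rewrite Hexp. apply Rle_trans with (exp (- L)).
  - apply exp_le_exp_compat. assert (4 <= (K + 1) ^ 2) by nra. nra.
  - unfold L. rewrite exp_Ropp, exp_ln by (apply Rdiv_lt_0_compat; [|lra]; pose proof (exp_pos eps); nra).
    unfold K. pose proof (exp_pos eps). right. field. split; lra.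
Qed.

Lemma count_leaks_le_fraction (eps delta : R) (d m n : nat) (Rz : nat -> nat -> R) (b : bool) :
  0 < eps -> 0 < delta < 1 -> (0 < n)%nat -> d = (2 * m)%nat -> (0 < m)%nat ->
  0 < eps_prime eps delta d n <= 3 ->
  randomizer d Rz -> private (in_range d) Rz eps 0 ->
  INR (length (filter (decP (fun H => leaks d Rz (eps_prime eps delta d n) delta H b))
                      (subsets_of_size d m)))
    <= binom d m / (12 * INR n).
Proof.
  intros Heps Hdelta Hn Hdm Hm [Heps'0 Heps'3] HRz Hpriv.
  assert (HdR : 0 < INR d) by (rewrite Hdm, mult_INR; apply Rmult_lt_0_compat; apply lt_0_INR; lia).
  assert (HnR : 0 < INR n) by (apply lt_0_INR; lia).
  pose proof (exp_gt_1 eps Heps) as HK.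
  pose proof (count_leaks_le d m Rz (exp eps) (eps_prime eps delta d n) delta (eps_prime eps delta d n / 5)
                Hdm Hm HRz (private_pointwise_ratio d Rz eps Hpriv) HK ltac:(lra)
                (one_add_le_exp_mul_one_sub (eps_prime eps delta d n) ltac:(split; lra)) b) as Hcount.
  pose proof (tail_le_delta eps delta d n Heps Hdelta Hn HdR) as Htail.
  pose proof (binom_nonneg d m) as Hbin.
  apply (Rmult_le_reg_r delta); [lra|]. eapply Rle_trans; [apply Hcount|].
  apply Rle_trans with (2 * (binom d m * (delta / (24 * exp eps * INR n)))).
  - apply Rmult_le_compat_l; [lra|]. now apply Rmult_le_compat_l.
  - replace (2 * (binom d m * (delta / (24 * exp eps * INR n))))
      with (binom d m / (12 * INR n) * delta / exp eps) by (field; pose proof (exp_pos eps); lra).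
    apply Rle_div_l; [lra|].
    assert (0 <= binom d m / (12 * INR n) * delta) by (apply Rmult_le_pos; [apply Rdiv_le_0_compat|]; lra).
    nra.
Qed.

Lemma lsum_count_leaks_le (eps delta : R) (d m n : nat) (Rs : nat -> nat -> nat -> R) :
  0 < eps -> 0 < delta < 1 -> (0 < n)%nat -> d = (2 * m)%nat -> (0 < m)%nat ->
  0 < eps_prime eps delta d n <= 3 ->
  (forall i, (i < n)%nat -> randomizer d (Rs i)) ->
  (forall i, (i < n)%nat -> private (in_range d) (Rs i) eps 0) ->
  lsum (list_prod [true; false] (seq 0 n))
    (fun bi => INR (length (filter (decP (fun H => leaks d (Rs (snd bi)) (eps_prime eps delta d n)
                                                          delta H (fst bi)))
                                   (subsets_of_size d m))))
  <= binom d m / 6.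
Proof.
  intros Heps Hdelta Hn Hdm Hm Heps' HR Hpriv.
  assert (HnR : 0 < INR n) by (apply lt_0_INR; lia).
  apply Rle_trans with (lsum (list_prod [true; false] (seq 0 n)) (fun _ => binom d m / (12 * INR n))).
  - apply lsum_le. intros [b i] [_ Hi%in_seq]%in_prod_iff.
    apply count_leaks_le_fraction; auto; [apply HR|apply Hpriv]; simpl; lia.
  - rewrite lsum_const, length_prod, length_seq, mult_INR. right. simpl INR. field. lra.
Qed.

Theorem mainTheorem9
  (eps delta : R) (d n : nat) (Rs : nat -> nat -> nat -> R)
  (Heps : 0 < eps) (Hdelta : 0 < delta < 1)
  (Hn : (0 < n)%nat)
  (Hdeven : Nat.Even d)
  (Hd : INR d > 4 * (exp (2 * eps) - 1) ^ 2 * ln (12 * exp eps * INR n / delta))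
  (HR : forall i, (i < n)%nat -> randomizer d (Rs i))
  (Hpriv : forall i, (i < n)%nat -> private (in_range d) (Rs i) eps 0) :
  prob_H d (fun H => forall i, (i < n)%nat ->
     private (fun _ : bool => True) (Q_HR d H (Rs i))
       ((exp (2 * eps) - 1) *
          sqrt (16 / INR d * ln (24 * exp eps * INR n / delta)))
       delta)
  > 2 / 3.
Proof.
  change ((exp (2 * eps) - 1) * sqrt (16 / INR d * ln (24 * exp eps * INR n / delta)))
    with (eps_prime eps delta d n).
  set (good H := forall i, (i < n)%nat ->
         private (fun _ : bool => True) (Q_HR d H (Rs i)) (eps_prime eps delta d n) delta).
  set (leaky bi H := leaks d (Rs (snd bi)) (eps_prime eps delta d n) delta H (fst bi)).
  destruct Hdeven as [m Hdm].
  destruct (eps_prime_bounds eps delta d n Heps Hdelta Hn Hd) as [HdR Heps'].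
  assert (Hm : (0 < m)%nat) by (destruct m; [subst; simpl in HdR; lra|lia]).
  assert (Hcover : forall H, In H (subsets_of_size d m) ->
                   (forall bi, In bi (list_prod [true; false] (seq 0 n)) -> ~ leaky bi H) -> good H).
  { intros H HH Hnot i Hi. apply (private_Q_HR_of_not_leaks d m); auto; try lra.
    intros b. apply (Hnot (b, i)), in_prod; [destruct b; simpl; auto|apply in_seq; lia]. }
  pose proof (count_union_bound _ _ good leaky Hcover) as Hunion.
  pose proof (lsum_count_leaks_le eps delta d m n Rs Heps Hdelta Hn Hdm Hm Heps' HR Hpriv) as Hbad.
  change (lsum (list_prod [true; false] (seq 0 n))
            (fun bi => INR (length (filter (decP (leaky bi)) (subsets_of_size d m)))) <= binom d m / 6)
    in Hbad.
  assert (HNH : 0 < binom d m) by (apply binom_pos; lia).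
  unfold prob_H. replace (half_subsets d) with (subsets_of_size d m)
    by (unfold half_subsets, subsets_of_size; rewrite Hdm, Nat.mul_comm, Nat.div_mul; auto).
  rewrite length_subsets_of_size in Hunion |- *.
  apply Rlt_gt, (Rmult_lt_reg_r (binom d m)); auto.
  unfold Rdiv at 2. rewrite Rmult_assoc, Rinv_l, Rmult_1_r by lra. lra.
Qed.
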